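(* Let $\eta=4\times10^{-6}$. Then \[ \mathcal{N}\supset\Delta_1=\{(\gamma,\lambda)\in(0,1)^2: |\gamma-2^{-1/2}|<\eta,\ |\lambda-2^{-1/2}|<\eta\}, \] \[ \mathcal{M}\supset\Delta_2=\{\lambda\in\mathbb{D}: |\lambda-2^{-1/2}|<3\eta/4\}, \] \[ \mathcal{O}\supset\Delta_3=\{\lambda\in(0,1): |\lambda-2^{-1/2}|<\eta\}. \]
   Context: Let $\mathcal{B}=\{1+\sum_{n=1}^\infty a_n x^n : a_n\in\{-1,0,1\}\}$ (power series converging on the open unit disk $\mathbb{D}\subset\mathbb{C}$). Define $\mathcal{M}=\{z\in\mathbb{D}: \exists f\in\mathcal{B},\ f(z)=0\}$, $\mathcal{N}=\{(\gamma,\lambda)\in(-1,1)^2: \exists f\in\mathcal{B},\ f(\gamma)=f(\lambda)=0\}$, $\mathcal{O}=\{\lambda\in(-1,1): \exists f\in\mathcal{B},\ f(\lambda)=f'(\lambda)=0\}$. *)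

From Stdlib Require Import Reals.
From Coquelicot Require Import Coquelicot.
Open Scope R_scope.

Definition coeffB (a : nat -> R) : Prop :=
  a 0%nat = 1 /\ forall n : nat, (1 <= n)%nat -> a n = -1 \/ a n = 0 \/ a n = 1.

Definition zeroC (a : nat -> R) (z : C) : Prop :=
  is_series (fun n : nat => Cmult (RtoC (a n)) (Cpow z n)) (RtoC 0).

Definition setM (z : C) : Prop :=
  Cmod z < 1 /\ exists a, coeffB a /\ zeroC a z.

Definition setN (g l : R) : Prop :=
  -1 < g < 1 /\ -1 < l < 1 /\
  exists a, coeffB a /\ PSeries a g = 0 /\ PSeries a l = 0.

Definition setO (l : R) : Prop :=
  -1 < l < 1 /\
  exists a, coeffB a /\ PSeries a l = 0 /\ Derive (PSeries a) l = 0.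

Definition eta : R := 4 / 1000000.

From Stdlib Require Import Reals.
From Coquelicot Require Import Coquelicot.
From Stdlib Require Import Lra Lia ZArith List Bool ClassicalEpsilon.
Import ListNotations.
Open Scope R_scope.

(* If P(x) = 1 - T x + D x^2 and u is a bounded real sequence with u_0 = u_1 = 0, then
   sum_n (u_(n+2) - T u_(n+1) + D u_n) x^n = P(x) * sum_n u_(n+2) x^n on the unit disk, so this
   power series vanishes at the roots of P there, doubly at a double root.  Its coefficients
   form an element of B when u_2 = 1 and u_(n+3) = T u_(n+2) - D u_(n+1) + d_n with digits d_n
   in {-1, 0, 1}.  For (T, D) close to (2 sqrt 2, 2), i.e. for roots close to 1/sqrt 2, the
   digits can be chosen greedily so that the state of this recurrence stays in a fixed compact
   region of the plane; that the region is invariant for every admissible (T, D) is checked on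
   a finite grid of cells by integer interval arithmetic. *)

(** * Power series with a quadratic factor *)

Definition quad_coef (T D : R) (u : nat -> R) (n : nat) : R :=
  u (S (S n)) - T * u (S n) + D * u n.

Lemma is_pseries_quadratic_mult {K : AbsRing} {V : NormedModule K} (u : nat -> V)
    (t d x : K) (s : V) :
  u 0%nat = zero -> u 1%nat = zero -> mult x t = mult t x -> mult x d = mult d x ->
  is_pseries (fun n => u (S (S n))) x s ->
  is_pseries (fun n => plus (minus (u (S (S n))) (scal t (u (S n)))) (scal d (u n))) x
    (plus (minus s (scal t (scal x s))) (scal d (scal x (scal x s)))).
Proof.
  intros u0 u1 xt xd Hs.
  pose proof (is_pseries_incr_1 _ _ _ Hs) as Hs1.
  pose proof (is_pseries_incr_1 _ _ _ Hs1) as Hs2.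
  pose proof (is_pseries_plus _ _ _ _ _
    (is_pseries_minus _ _ _ _ _ Hs (is_pseries_scal t _ _ _ xt Hs1))
    (is_pseries_scal d _ _ _ xd Hs2)) as H.
  refine (is_pseries_ext _ _ _ _ _ H).
  intros n; unfold PS_plus, PS_minus, PS_scal, PS_incr_1, minus.
  now destruct n as [|[|n]]; rewrite ?u0, ?u1.
Qed.

Lemma ex_pseries_bounded {K : AbsRing} {V : CompleteNormedModule K} (a : nat -> V)
    (x : K) (M : R) :
  (forall n, norm (a n) <= M) -> abs x < 1 -> ex_pseries a x.
Proof.
  intros Ha Hx.
  apply (ex_series_le _ (fun n => M * abs x ^ n)).
  - intros n. eapply Rle_trans; [apply norm_scal|].
    rewrite Rmult_comm. apply Rmult_le_compat; auto using norm_ge_0, abs_ge_0, abs_pow_n.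
  - apply (ex_series_scal_l M (fun n => abs x ^ n)), ex_series_geom.
    rewrite Rabs_pos_eq; auto using abs_ge_0.
Qed.

Lemma CV_radius_bounded_gt (a : nat -> R) (M x : R) :
  (forall n, Rabs (a n) <= M) -> Rabs x < 1 -> Rbar_lt (Rabs x) (CV_radius a).
Proof.
  intros Ha Hx. apply (Rbar_lt_le_trans _ 1); [exact Hx|].
  apply (proj1 (CV_radius_bounded a)). exists M. intros n.
  now rewrite pow1, Rmult_1_r.
Qed.

Lemma pow_n_Cpow (z : C) (n : nat) : pow_n z n = Cpow z n.
Proof. induction n as [|n IH]; simpl; [reflexivity|now rewrite IH]. Qed.

Section QuadraticFactor.

Variables (T D M : R) (u : nat -> R).
Hypotheses (u0 : u 0%nat = 0) (u1 : u 1%nat = 0) (u_bounded : forall n, Rabs (u n) <= M).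

Let v (n : nat) : R := u (S (S n)).

Lemma PSeries_quad_coef (x : R) : Rabs x < 1 ->
  PSeries (quad_coef T D u) x = (1 - T * x + D * x ^ 2) * PSeries v x.
Proof.
  intros Hx.
  assert (Hv : Rbar_lt (Rabs x) (CV_radius v))
    by exact (CV_radius_bounded_gt v M x (fun n => u_bounded _) Hx).
  apply is_pseries_unique.
  pose proof (is_pseries_quadratic_mult u T D x _ u0 u1 (Rmult_comm _ _) (Rmult_comm _ _)
    (PSeries_correct _ _ (CV_radius_inside _ _ Hv))) as H.
  replace ((1 - T * x + D * x ^ 2) * PSeries v x) with
    (plus (minus (PSeries v x) (scal T (scal x (PSeries v x))))
       (scal D (scal x (scal x (PSeries v x))))).
  - exact H.
  - unfold scal, minus, opp, plus; simpl. unfold mult; simpl. ring.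
Qed.

Lemma Derive_PSeries_quad_coef_double_root (l : R) : Rabs l < 1 ->
  1 - T * l + D * l ^ 2 = 0 -> - T + 2 * D * l = 0 ->
  Derive (PSeries (quad_coef T D u)) l = 0.
Proof.
  intros Hl Hroot Hroot'.
  assert (Hnear : locally l (fun y => Rabs y < 1)).
  { apply (open_comp Rabs (fun r => r < 1)); [|apply open_lt|exact Hl].
    intros y _; apply continuous_Rabs. }
  apply is_derive_unique.
  apply (is_derive_ext_loc (fun y => (1 - T * y + D * y ^ 2) * PSeries v y)).
  - exact (filter_imp _ _ (fun y Hy => eq_sym (PSeries_quad_coef y Hy)) Hnear).
  - replace 0 with ((- T + 2 * D * l) * PSeries v l
                    + (1 - T * l + D * l ^ 2) * Derive (PSeries v) l)
      by (rewrite Hroot, Hroot'; ring).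
    apply (is_derive_mult (fun y => 1 - T * y + D * y ^ 2) (PSeries v)).
    + auto_derive; [exact I|ring].
    + apply Derive_correct, ex_derive_PSeries.
      exact (CV_radius_bounded_gt v M l (fun n => u_bounded _) Hl).
    + intros; apply Rmult_comm.
Qed.

Lemma zeroC_quad_coef (z : C) : Cmod z < 1 ->
  (1 - T * z + D * Cpow z 2 = 0)%C -> zeroC (quad_coef T D u) z.
Proof.
  intros Hz Hroot.
  destruct (ex_pseries_bounded (V := C_CompleteNormedModule) (fun n => RtoC (v n)) z M)
    as [s Hs]; [intros n; change (Cmod (v n) <= M); rewrite Cmod_R; apply u_bounded|exact Hz|].
  pose proof (is_pseries_quadratic_mult (fun n => RtoC (u n)) (RtoC T) (RtoC D) z s
    (f_equal RtoC u0) (f_equal RtoC u1) (Cmult_comm _ _) (Cmult_comm _ _) Hs) as H.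
  unfold zeroC.
  replace (RtoC 0) with (plus (minus s (scal (RtoC T) (scal z s)))
                              (scal (RtoC D) (scal z (scal z s)))).
  - refine (is_series_ext _ _ _ _ H). intros n.
    rewrite pow_n_Cpow. unfold quad_coef. rewrite RtoC_plus, RtoC_minus, !RtoC_mult.
    unfold scal, plus, minus, opp; simpl. unfold mult, plus; simpl. ring.
  - unfold scal, plus, minus, opp; simpl. unfold mult, plus; simpl.
    transitivity ((1 - T * z + D * Cpow z 2) * s)%C; [simpl; ring|].
    rewrite Hroot. ring.
Qed.

End QuadraticFactor.

(** * Greedy choice of the digits *)

Definition digit (d : R) : Prop := d = -1 \/ d = 0 \/ d = 1.

Lemma greedy_orbit {State Digit : Type} (K : State -> Prop) (P : Digit -> Prop)
    (f : State -> Digit -> State) (s0 : State) :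
  K s0 -> (forall s, K s -> exists d, P d /\ K (f s d)) ->
  exists (d : nat -> Digit) (s : nat -> State), s 0%nat = s0 /\
    forall n, P (d n) /\ K (s n) /\ s (S n) = f (s n) (d n).
Proof.
  intros H0 Hstep.
  assert (choose : forall s : {s | K s}, {d | P d /\ K (f (proj1_sig s) d)}).
  { intros [s Hs]. apply constructive_indefinite_description, Hstep, Hs. }
  pose (next (s : {s | K s}) :=
    exist K (f (proj1_sig s) (proj1_sig (choose s))) (proj2 (proj2_sig (choose s)))).
  pose (orbit := fix orbit n := match n with O => exist K s0 H0 | S n => next (orbit n) end).
  exists (fun n => proj1_sig (choose (orbit n))), (fun n => proj1_sig (orbit n)).
  split; [reflexivity|]. intros n.
  split; [exact (proj1 (proj2_sig (choose (orbit n))))|].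
  split; [exact (proj2_sig (orbit n))|reflexivity].
Qed.

(* In the coordinates w = u_(n+2), z = u_(n+2) - m u_(n+1) the recurrence
   u_(n+3) = T u_(n+2) - D u_(n+1) + d becomes [step m (T - D/m) (D/m)]; for m = sqrt 2 and
   (T, D) = (2 sqrt 2, 2) its linear part is the Jordan block sqrt 2 * [[1, 1], [0, 1]]. *)
Definition step (m A B : R) (p : R * R) (d : R) : R * R :=
  (A * fst p + B * snd p + d, (A - m) * fst p + B * snd p + d).

Definition shift2 (w : nat -> R) (n : nat) : R :=
  match n with O | S O => 0 | S (S k) => w k end.

Lemma quad_coef_orbit (T D m : R) (d : nat -> R) (s : nat -> R * R) : m <> 0 ->
  s 0%nat = (1, 1) -> (forall n, s (S n) = step m (T - D / m) (D / m) (s n) (d n)) ->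
  forall n, quad_coef T D (shift2 (fun k => fst (s k))) n = match n with O => 1 | S k => d k end.
Proof.
  intros Hm Hs0 Hs.
  set (u := shift2 (fun k => fst (s k))).
  assert (Hsnd : forall k, snd (s k) = fst (s k) - m * u (S k)).
  { induction k as [|k IH].
    - rewrite Hs0. simpl. ring.
    - rewrite Hs. unfold step. simpl. ring. }
  intros [|k]; unfold quad_coef.
  - simpl. rewrite Hs0. simpl. ring.
  - change (u (S (S (S k)))) with (fst (s (S k))). change (u (S (S k))) with (fst (s k)).
    rewrite Hs. unfold step. simpl fst. rewrite Hsnd. field. exact Hm.
Qed.

(** * The trap region *)

Definition sq2 : R := 141421 / 100000.
Definition tol : R := 1 / 10000.

(* Column i = -29, -28, ... lists the intervals of j for which the cell
   [i/8, (i+1)/8] x [j/40, (j+1)/40] belongs to the trap region. *)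
Definition columns : list (list (Z * Z)) := [
  [(85, 85)];
  [(27, 27); (55, 56); (83, 84)];
  [(26, 26); (54, 54); (82, 83)];
  [(24, 26); (52, 54); (78, 78); (80, 83)];
  [(20, 25); (37, 37); (49, 54); (65, 65); (77, 82)];
  [(7, 7); (15, 15); (20, 25); (35, 36); (48, 53); (63, 64); (76, 81)];
  [(6, 6); (13, 15); (17, 24); (34, 34); (41, 43); (45, 52); (62, 63); (70, 71); (73, 80)];
  [(1, 1); (4, 6); (12, 23); (30, 30); (32, 34); (40, 51); (58, 58); (61, 62); (68, 79)];
  [(-11, -11); (1, 6); (8, 8); (10, 21); (29, 34); (38, 49); (57, 62); (67, 78)];
  [(-14, -13); (-5, -5); (-1, 21); (23, 23); (27, 49); (51, 52); (56, 78)];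
  [(-14, -14); (-7, -5); (-3, 23); (25, 77)];
  [(-19, -18); (-16, -14); (-8, 76)];
  [(-19, -14); (-10, 75)];
  [(-25, -25); (-21, -13); (-11, 73)];
  [(-27, -25); (-23, 73)];
  [(-28, 71)];
  [(-30, 71)];
  [(-33, -33); (-31, 70)];
  [(-33, 68)];
  [(-39, -39); (-35, 68)];
  [(-41, -38); (-36, 67)];
  [(-43, 64)];
  [(-44, 64)];
  [(-47, 62)];
  [(-49, 61)];
  [(-50, 60)];
  [(-51, 58)];
  [(-53, 57)];
  [(-53, 56)];
  [(-57, 52)];
  [(-58, 52)];
  [(-59, 50)];
  [(-61, 49)];
  [(-62, 48)];
  [(-63, 46)];
  [(-65, 43)];
  [(-65, 42)];
  [(-68, 35); (37, 40)];
  [(-69, 34); (38, 38)];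
  [(-69, 32)];
  [(-71, 30); (32, 32)];
  [(-72, 29)];
  [(-72, 27)];
  [(-74, 22); (24, 26)];
  [(-74, 10); (12, 20); (24, 24)];
  [(-76, 9); (13, 18)];
  [(-77, 7); (13, 15); (17, 18)];
  [(-78, -26); (-24, 2); (4, 6); (13, 13)];
  [(-79, -57); (-53, -52); (-50, -28); (-24, -24); (-22, 0); (4, 4); (12, 13)];
  [(-79, -68); (-63, -58); (-50, -39); (-35, -30); (-22, -11); (-9, -9); (-7, -2); (10, 10)];
  [(-80, -69); (-63, -62); (-59, -59); (-52, -41); (-35, -33); (-31, -31); (-24, -13); (-7, -5); (-2, -2)];
  [(-81, -74); (-72, -71); (-64, -63); (-53, -46); (-44, -42); (-35, -35); (-25, -18); (-16, -14); (-7, -7)];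
  [(-82, -77); (-65, -64); (-54, -49); (-37, -36); (-26, -21); (-16, -16); (-8, -8)];
  [(-83, -78); (-66, -66); (-55, -50); (-38, -38); (-26, -21)];
  [(-84, -81); (-79, -79); (-55, -53); (-27, -25)];
  [(-84, -83); (-55, -55); (-27, -27)];
  [(-85, -84); (-57, -56); (-28, -28)];
  [(-86, -86)]
]%Z.

Definition column (i : Z) : list (Z * Z) :=
  if (i <? -29)%Z then [] else nth (Z.to_nat (i + 29)) columns [].

Definition alive (i j : Z) : bool :=
  (-48 <=? i)%Z && (i <? 48)%Z && (-100 <=? j)%Z && (j <? 100)%Z &&
  existsb (fun p => (fst p <=? j)%Z && (j <=? snd p)%Z) (column i).

Definition all_between (P : Z -> bool) (lo hi : Z) : bool :=
  forallb (fun n => P (lo + Z.of_nat n)%Z) (seq 0 (Z.to_nat (hi - lo + 1))).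

Lemma all_betweenP (P : Z -> bool) (lo hi : Z) :
  all_between P lo hi = true -> forall k, (lo <= k <= hi)%Z -> P k = true.
Proof.
  intros H k Hk. unfold all_between in H. rewrite forallb_forall in H.
  replace k with (lo + Z.of_nat (Z.to_nat (k - lo)))%Z by lia.
  apply H, in_seq. lia.
Qed.

(* Bounds, scaled by 4 * 10^6, on the image of cell (i, j) under [step sq2 A B _ d]:
   707105 = 4 * 10^6 * sq2 / 8, 141421 = 4 * 10^6 * sq2 / 40, and the margin
   3400 = 4 * 10^6 * tol * (6 + 5/2) absorbs the errors A - sq2 and B - sq2. *)
Definition wimg_lo (i j d : Z) : Z := 707105 * i + 141421 * j + 4000000 * d - 3400.
Definition wimg_hi (i j d : Z) : Z :=
  707105 * (i + 1) + 141421 * (j + 1) + 4000000 * d + 3400.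
Definition zimg_lo (j d : Z) : Z := 141421 * j + 4000000 * d - 3400.
Definition zimg_hi (j d : Z) : Z := 141421 * (j + 1) + 4000000 * d + 3400.

Definition maps_into (i j d : Z) : bool :=
  all_between
    (fun k => all_between (alive k) (zimg_lo j d / 100000) (zimg_hi j d / 100000))
    (wimg_lo i j d / 500000) (wimg_hi i j d / 500000).

Definition cell_ok (i j : Z) : bool := maps_into i j 0 || maps_into i j (-1) || maps_into i j 1.

Lemma all_cells_ok :
  all_between (fun i => forallb (fun p => all_between (cell_ok i) (fst p) (snd p)) (column i))
    (-48) 47 = true.
Proof. vm_compute. reflexivity. Qed.

Lemma alive_cell_ok (i j : Z) : alive i j = true -> cell_ok i j = true.
Proof.
  intros H. unfold alive in H. rewrite !andb_true_iff, !Z.leb_le, !Z.ltb_lt in H.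
  destruct H as [[[[Hi1 Hi2] _] _] Hj]. apply existsb_exists in Hj as [p [Hp Hj]].
  rewrite andb_true_iff, !Z.leb_le in Hj.
  pose proof (all_betweenP _ _ _ all_cells_ok i ltac:(lia)) as Hcol.
  rewrite forallb_forall in Hcol.
  exact (all_betweenP _ _ _ (Hcol p Hp) j Hj).
Qed.

Definition in_cell (i j : Z) (w z : R) : Prop :=
  IZR i / 8 <= w <= IZR (i + 1) / 8 /\ IZR j / 40 <= z <= IZR (j + 1) / 40.

Lemma in_cell_bounds (i j : Z) (w z : R) :
  alive i j = true -> in_cell i j w z -> Rabs w <= 6 /\ Rabs z <= 5 / 2.
Proof.
  intros H [Hw Hz]. unfold alive in H. rewrite !andb_true_iff, !Z.leb_le, !Z.ltb_lt in H.
  destruct H as [[[[Hi1 Hi2] Hj1] Hj2] _].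
  assert (Hi : (i + 1 <= 48)%Z) by lia. assert (Hj : (j + 1 <= 100)%Z) by lia.
  apply IZR_le in Hi1, Hi, Hj1, Hj.
  split; apply Rabs_le; lra.
Qed.

Lemma mul_near_bounds (A a e w lo hi M : R) : 0 <= a -> Rabs (A - a) <= e ->
  lo <= w <= hi -> Rabs w <= M -> a * lo - e * M <= A * w <= a * hi + e * M.
Proof.
  intros Ha HA Hw HM.
  assert (Herr : Rabs ((A - a) * w) <= e * M).
  { rewrite Rabs_mult. apply Rmult_le_compat; auto using Rabs_pos. }
  apply Rabs_le_between in Herr.
  assert (a * lo <= a * w <= a * hi) by (split; apply Rmult_le_compat_l; lra).
  replace (A * w) with (a * w + (A - a) * w) by ring. lra.
Qed.

Ltac push_IZR :=
  repeat (rewrite plus_IZR || rewrite minus_IZR || rewrite mult_IZR || rewrite opp_IZR).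

Lemma image_bounds (A B w z : R) (i j d : Z) :
  Rabs (A - sq2) <= tol -> Rabs (B - sq2) <= tol -> alive i j = true -> in_cell i j w z ->
  IZR (wimg_lo i j d) <= 4000000 * (A * w + B * z + IZR d) <= IZR (wimg_hi i j d) /\
  IZR (zimg_lo j d) <= 4000000 * ((A - sq2) * w + B * z + IZR d) <= IZR (zimg_hi j d).
Proof.
  intros HA HB Hij Hcell.
  destruct (in_cell_bounds _ _ _ _ Hij Hcell) as [Hw Hz]. destruct Hcell as [Hwc Hzc].
  assert (HC : Rabs (A - sq2 - 0) <= tol) by (rewrite Rminus_0_r; exact HA).
  pose proof (mul_near_bounds A sq2 tol w _ _ 6 ltac:(unfold sq2; lra) HA Hwc Hw).
  pose proof (mul_near_bounds B sq2 tol z _ _ (5 / 2) ltac:(unfold sq2; lra) HB Hzc Hz).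
  pose proof (mul_near_bounds (A - sq2) 0 tol w _ _ 6 (Rle_refl 0) HC Hwc Hw).
  unfold wimg_lo, wimg_hi, zimg_lo, zimg_hi. push_IZR.
  rewrite plus_IZR in *. unfold sq2, tol in *. lra.
Qed.

Lemma cell_index (h lo hi : Z) (x : R) : (0 < h)%Z -> IZR lo <= x <= IZR hi ->
  exists k, (lo / h <= k <= hi / h)%Z /\ IZR (h * k) <= x <= IZR (h * (k + 1)).
Proof.
  intros Hh Hx.
  assert (Hh' : 0 < IZR h) by (apply IZR_lt; exact Hh).
  set (k := Int_part (x / IZR h)).
  destruct (base_Int_part (x / IZR h)) as [Hk1 Hk2]. fold k in Hk1, Hk2.
  assert (Hx_h : x = IZR h * (x / IZR h)) by (field; lra).
  assert (Hlo : IZR (h * k) <= x) by (rewrite mult_IZR, Hx_h; apply Rmult_le_compat_l; lra).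
  assert (Hhi : x < IZR (h * (k + 1))).
  { rewrite mult_IZR, plus_IZR, Hx_h at 1. apply Rmult_lt_compat_l; lra. }
  exists k. split; [|lra]. split.
  - assert (h * (lo / h) < h * (k + 1))%Z; [|nia].
    apply lt_IZR. pose proof (Z.mul_div_le lo h Hh) as E. apply IZR_le in E. lra.
  - assert (h * k < h * (hi / h + 1))%Z; [|nia].
    apply lt_IZR. pose proof (Z.mul_succ_div_gt hi h Hh) as E. apply IZR_lt in E.
    rewrite <- Z.add_1_r in E. lra.
Qed.

Definition trap (p : R * R) : Prop :=
  exists i j, alive i j = true /\ in_cell i j (fst p) (snd p).

Lemma maps_into_sound (A B w z : R) (i j d : Z) :
  Rabs (A - sq2) <= tol -> Rabs (B - sq2) <= tol -> alive i j = true -> in_cell i j w z ->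
  maps_into i j d = true -> trap (step sq2 A B (w, z) (IZR d)).
Proof.
  intros HA HB Hij Hcell Hmaps.
  destruct (image_bounds A B w z i j d HA HB Hij Hcell) as [Hw' Hz'].
  destruct (cell_index 500000 _ _ _ ltac:(lia) Hw') as [k [Hk Hwk]].
  destruct (cell_index 100000 _ _ _ ltac:(lia) Hz') as [l [Hl Hzl]].
  exists k, l. split.
  - exact (all_betweenP _ _ _ (all_betweenP _ _ _ Hmaps k Hk) l Hl).
  - rewrite !mult_IZR in Hwk, Hzl. unfold in_cell; simpl. lra.
Qed.

Lemma trap_invariant (A B : R) (p : R * R) :
  Rabs (A - sq2) <= tol -> Rabs (B - sq2) <= tol -> trap p ->
  exists d, digit d /\ trap (step sq2 A B p d).
Proof.
  intros HA HB [i [j [Hij Hcell]]]. destruct p as [w z].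
  pose proof (alive_cell_ok i j Hij) as Hok. unfold cell_ok in Hok.
  rewrite !orb_true_iff in Hok. destruct Hok as [[H0 | Hm1] | H1].
  - exists 0. split; [unfold digit; tauto|].
    exact (maps_into_sound A B w z i j 0 HA HB Hij Hcell H0).
  - exists (-1). split; [unfold digit; tauto|].
    exact (maps_into_sound A B w z i j (-1) HA HB Hij Hcell Hm1).
  - exists 1. split; [unfold digit; tauto|].
    exact (maps_into_sound A B w z i j 1 HA HB Hij Hcell H1).
Qed.

Lemma trap_bounded (p : R * R) : trap p -> Rabs (fst p) <= 6.
Proof. intros [i [j [Hij Hcell]]]. exact (proj1 (in_cell_bounds _ _ _ _ Hij Hcell)). Qed.

Lemma trap_start : trap (1, 1).
Proof.
  exists 8%Z, 40%Z. split; [vm_compute; reflexivity|].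
  unfold in_cell; simpl; lra.
Qed.

Lemma exists_bounded_quad_coef_coeffB (T D : R) :
  Rabs (T - D / sq2 - sq2) <= tol -> Rabs (D / sq2 - sq2) <= tol ->
  exists u, u 0%nat = 0 /\ u 1%nat = 0 /\ (forall n, Rabs (u n) <= 6) /\
    coeffB (quad_coef T D u).
Proof.
  intros HA HB.
  destruct (greedy_orbit trap digit (step sq2 (T - D / sq2) (D / sq2)) (1, 1) trap_start
              (fun p => trap_invariant _ _ p HA HB)) as [d [s [Hs0 Hs]]].
  pose proof (quad_coef_orbit T D sq2 d s ltac:(unfold sq2; lra) Hs0
                (fun n => proj2 (proj2 (Hs n)))) as Hq.
  exists (shift2 (fun k => fst (s k))). split; [reflexivity|]. split; [reflexivity|]. split.
  - intros [|[|k]]; simpl; [rewrite Rabs_R0; lra|rewrite Rabs_R0; lra|].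
    exact (trap_bounded _ (proj1 (proj2 (Hs k)))).
  - split; [exact (Hq 0%nat)|].
    intros [|k] Hk; [inversion Hk|]. rewrite Hq. exact (proj1 (Hs k)).
Qed.

(** * Roots near 1 / sqrt 2 *)

Lemma sqrt2_bounds : 141421356 / 100000000 < sqrt 2 < 141421357 / 100000000.
Proof.
  assert (H2 : sqrt 2 * sqrt 2 = 2) by (apply sqrt_sqrt; lra).
  pose proof (sqrt_pos 2). split; nra.
Qed.

Lemma inv_sqrt2 : / sqrt 2 = sqrt 2 / 2.
Proof.
  assert (H2 : sqrt 2 * sqrt 2 = 2) by (apply sqrt_sqrt; lra).
  pose proof sqrt2_bounds. field_simplify_eq; lra.
Qed.

Lemma inv_near_inv_sqrt2 (g : R) : 0 < g -> Rabs (g - / sqrt 2) < eta ->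
  141420 / 100000 <= / g <= 141423 / 100000.
Proof.
  intros Hg H. rewrite inv_sqrt2 in H. pose proof sqrt2_bounds.
  unfold eta in H. apply Rabs_lt_between in H.
  assert (g * / g = 1) by (field; lra).
  assert (0 < / g) by (apply Rinv_0_lt_compat, Hg).
  split; nra.
Qed.

Lemma near_params_sum_prod (X Y : R) :
  141420 / 100000 <= X <= 141423 / 100000 -> 141420 / 100000 <= Y <= 141423 / 100000 ->
  Rabs (X + Y - X * Y / sq2 - sq2) <= tol /\ Rabs (X * Y / sq2 - sq2) <= tol.
Proof.
  intros HX HY.
  assert (141420 / 100000 * (141420 / 100000) <= X * Y) by (apply Rmult_le_compat; lra).
  assert (X * Y <= 141423 / 100000 * (141423 / 100000)) by (apply Rmult_le_compat; lra).
  unfold sq2, tol. split; apply Rabs_le_between; lra.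
Qed.

Lemma setN_near (g l : R) : 0 < g < 1 -> 0 < l < 1 ->
  Rabs (g - / sqrt 2) < eta -> Rabs (l - / sqrt 2) < eta -> setN g l.
Proof.
  intros Hg Hl Hgs Hls.
  destruct (near_params_sum_prod (/ g) (/ l) (inv_near_inv_sqrt2 g ltac:(lra) Hgs)
              (inv_near_inv_sqrt2 l ltac:(lra) Hls)) as [HA HB].
  destruct (exists_bounded_quad_coef_coeffB _ _ HA HB) as [u [u0 [u1 [Hu Ha]]]].
  split; [lra|]. split; [lra|]. exists (quad_coef (/ g + / l) (/ g * / l) u).
  split; [exact Ha|].
  split; rewrite (PSeries_quad_coef _ _ _ _ u0 u1 Hu) by (rewrite Rabs_pos_eq; lra);
    apply Rmult_eq_0_compat_r; field; lra.
Qed.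

Lemma setO_near (l : R) : 0 < l < 1 -> Rabs (l - / sqrt 2) < eta -> setO l.
Proof.
  intros Hl Hls.
  pose proof (inv_near_inv_sqrt2 l ltac:(lra) Hls) as HX.
  destruct (near_params_sum_prod (/ l) (/ l) HX HX) as [HA HB].
  destruct (exists_bounded_quad_coef_coeffB _ _ HA HB) as [u [u0 [u1 [Hu Ha]]]].
  split; [lra|]. exists (quad_coef (/ l + / l) (/ l * / l) u). split; [exact Ha|]. split.
  - rewrite (PSeries_quad_coef _ _ _ _ u0 u1 Hu) by (rewrite Rabs_pos_eq; lra).
    apply Rmult_eq_0_compat_r. field. lra.
  - apply (Derive_PSeries_quad_coef_double_root _ _ _ _ u0 u1 Hu);
      [rewrite Rabs_pos_eq; lra|field; lra|field; lra].
Qed.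

Lemma Im_le_Cmod (c : C) : Rabs (Im c) <= Cmod c.
Proof.
  rewrite <- (Rabs_pos_eq (Cmod c)) by apply Cmod_ge_0.
  apply Rsqr_le_abs_0. pose proof (Cmod2_alt c). unfold Rsqr. nra.
Qed.

Lemma setM_near (z : C) : Cmod z < 1 ->
  Cmod (Cminus z (RtoC (/ sqrt 2))) < 3 * eta / 4 -> setM z.
Proof.
  intros Hz Hd. rewrite inv_sqrt2 in Hd. pose proof sqrt2_bounds.
  pose proof (re_le_Cmod (Cminus z (RtoC (sqrt 2 / 2)))) as HR.
  pose proof (Im_le_Cmod (Cminus z (RtoC (sqrt 2 / 2)))) as HI.
  destruct z as [x y]. simpl in HR, HI. unfold eta in Hd.
  assert (Hx : Rabs (x - sqrt 2 / 2) < 3 / 1000000) by (unfold Rminus; lra).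
  assert (Hy : Rabs y < 3 / 1000000) by (rewrite Ropp_0, Rplus_0_r in HI; lra).
  apply Rabs_lt_between in Hx, Hy.
  set (r := x * x + y * y).
  assert (Hr : 707103 / 1000000 * (707103 / 1000000) <= r
               <= 707111 / 1000000 * (707111 / 1000000) + 1 / 100000000000)
    by (unfold r; split; nra).
  set (p := / r).
  assert (r * p = 1) by (unfold p; field; lra).
  assert (Hp : 199997 / 100000 <= p <= 200003 / 100000) by (split; nra).
  assert (707103 / 1000000 * (199997 / 100000) <= x * p <= 707111 / 1000000 * (200003 / 100000))
    by (split; apply Rmult_le_compat; lra).
  assert (HA : Rabs (2 * x * p - p / sq2 - sq2) <= tol)
    by (unfold sq2, tol; apply Rabs_le_between; lra).
  assert (HB : Rabs (p / sq2 - sq2) <= tol) by (unfold sq2, tol; apply Rabs_le_between; lra).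
  destruct (exists_bounded_quad_coef_coeffB _ _ HA HB) as [u [u0 [u1 [Hu Ha]]]].
  split; [exact Hz|]. exists (quad_coef (2 * x * p) p u). split; [exact Ha|].
  apply (zeroC_quad_coef _ _ _ _ u0 u1 Hu _ Hz).
  unfold p, r. apply injective_projections; simpl; field; fold r; lra.
Qed.

Theorem theorem2p10 :
  (forall g l : R, 0 < g < 1 -> 0 < l < 1 ->
     Rabs (g - / sqrt 2) < eta -> Rabs (l - / sqrt 2) < eta -> setN g l) /\
  (forall z : C, Cmod z < 1 ->
     Cmod (Cminus z (RtoC (/ sqrt 2))) < 3 * eta / 4 -> setM z) /\
  (forall l : R, 0 < l < 1 -> Rabs (l - / sqrt 2) < eta -> setO l).
Proof.
  split; [exact setN_near|]. split; [exact setM_near|exact setO_near].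
Qed.
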